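(* Let $n\ge 2d\ge 2$ be integers. There is a set $\mathcal{M}_d$ of $d$-matchings on $[n]$ of size $N:=|\mathcal{M}_d|\ge \binom{n}{d}/(4\cdot 2^d)$ and a set $\mathcal{S}_d$ of $d$-subsets of $[n]$ such that for every $S\in\mathcal{S}_d$ there is a unique matching $M\in\mathcal{M}_d$ which fully crosses $S$, and for every $M\in\mathcal{M}_d$ there is at least one $S\in\mathcal{S}_d$ which $M$ fully crosses. Moreover, for every $S\in\mathcal{S}_d$ there is a unique $M\in\mathcal{M}_d$ with $q_M(\mathbf{1}_S)\neq 0$, so the span of $\{q_M:M\in\mathcal{M}_d\}$ has dimension exactly $N$.
   Context: A $d$-matching on $[n]=\{1,\dots,n\}$ is a set of $d$ pairwise disjoint $2$-element subsets (edges) of $[n]$. For such $M$, $q_M(x_1,\dots,x_n)=\prod_{\{i,j\}\in M,\, i<j}(x_i-x_j)$. A $d$-matching $M$ fully crosses a $d$-subset $S\subseteq[n]$ if every edge of $M$ has exactly one endpoint in $S$. $\mathbf{1}_S\in\mathbb{R}^n$ is the indicator vector of $S$. *)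

From mathcomp Require Import all_boot all_order all_algebra.
From mathcomp Require Import mpoly.
Set Implicit Arguments. Unset Strict Implicit. Unset Printing Implicit Defensive.
Import Order.TTheory GRing.Theory Num.Theory.
Local Open Scope ring_scope.

(* Vertices [n] = {1..n} are represented by 'I_n = {0..n-1}.
   An edge is a 2-element subset of 'I_n; a matching is a set of edges. *)

Definition is_matching (n d : nat) (M : {set {set 'I_n}}) : bool :=
  [&& #|M| == d,
      [forall e in M, #|e| == 2] &
      [forall e1 in M, forall e2 in M, (e1 != e2) ==> [disjoint e1 & e2]]].

Definition fully_crosses (n : nat) (M : {set {set 'I_n}}) (S : {set 'I_n}) : bool :=
  [forall e in M, #|e :&: S| == 1].

Definition qM (R : ringType) (n : nat) (M : {set {set 'I_n}}) : {mpoly R[n]} :=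
  \prod_(e in M) \prod_(i in e) \prod_(j in e | (i < j)%N) ('X_i - 'X_j).

Definition indic (R : ringType) (n : nat) (S : {set 'I_n}) : 'I_n -> R :=
  fun i => (i \in S)%:R.

From mathcomp Require Import all_boot all_order all_algebra.
From mathcomp Require Import mpoly.
From mathcomp Require Import zify.
Import Order.TTheory GRing.Theory Num.Theory.
Set Implicit Arguments. Unset Strict Implicit. Unset Printing Implicit Defensive.

(* To a d-set S attach the matching M_S pairing the k-th element of S with the
   k-th element of its complement; it fully crosses S. A d-set S' fully crossed by
   M_S is determined by its trace on S, so M_S fully crosses at most 2^d d-sets.
   In the digraph "M_S fully crosses S'" on the d-sets every out-degree is thus at
   most 2^d, and greedily removing a vertex of total degree at most 2 * 2^d together
   with its neighbours yields an independent family F with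
   'C(n, d) <= (2 * 2^d + 1) |F|. Take S_d = F and M_d = {M_S | S in F}. Since
   q_M(1_S) != 0 exactly when M fully crosses S, independence says that the points
   1_S (S in F) separate the polynomials q_M, which are therefore linearly
   independent. *)

Lemma card_sep (T : finType) (A : {set T}) (P : pred T) :
  #|[set x in A | P x]| = \sum_(x in A) P x.
Proof.
rewrite -sum1_card big_mkcond [RHS]big_mkcond /=; apply: eq_bigr => x _.
by rewrite inE; case: (x \in A); case: (P x).
Qed.

Lemma card_set2I (T : finType) (a b : T) (A : {set T}) : a != b ->
  #|[set a; b] :&: A| = (a \in A) + (b \in A).
Proof.
move=> ab; have -> : [set a; b] :&: A = [set x in [set a; b] | x \in A].
  by apply/setP => x; rewrite !inE.
by rewrite card_sep big_setU1 ?big_set1 // inE.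
Qed.

Lemma card_set2I_eq1 (T : finType) (a b : T) (A : {set T}) : a != b ->
  (#|[set a; b] :&: A| == 1) = ((a \in A) != (b \in A)).
Proof. by move=> ab; rewrite card_set2I //; case: (a \in A); case: (b \in A). Qed.

Section IndependentSet.
Variables (T : finType) (adj : rel T).
Implicit Types (V F : {set T}) (x y : T).

Definition out_nbhd V x := [set y in V | (y != x) && adj x y].
Definition in_nbhd V x := [set y in V | (y != x) && adj y x].
Definition nbhd V x := out_nbhd V x :|: in_nbhd V x.
Definition independent F := {in F &, forall x y, x != y -> ~~ adj x y}.

Lemma out_nbhdS V V' x : V' \subset V -> out_nbhd V' x \subset out_nbhd V x.
Proof.
by move=> /subsetP sV'V; apply/subsetP => y; rewrite !inE => /andP[/sV'V -> ->].
Qed.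

Lemma sum_card_in_nbhd V :
  \sum_(x in V) #|in_nbhd V x| = \sum_(x in V) #|out_nbhd V x|.
Proof.
under eq_bigr do rewrite /in_nbhd card_sep.
under [RHS]eq_bigr do rewrite /out_nbhd card_sep.
rewrite exchange_big /=; apply: eq_bigr => x _; apply: eq_bigr => y _.
by rewrite eq_sym.
Qed.

Variable D : nat.

(* Double counting: the total degree is twice the total out-degree. *)
Lemma low_degree_vertex V : V != set0 -> {in V, forall x, #|out_nbhd V x| <= D} ->
  exists2 v, v \in V & #|nbhd V v| <= D.*2.
Proof.
move=> V0 hout; have V_gt0 : 0 < #|V| by rewrite card_gt0.
have sum_nbhd : \sum_(x in V) #|nbhd V x| <= (D * #|V|).*2.
  apply: (@leq_trans (\sum_(x in V) (#|out_nbhd V x| + #|in_nbhd V x|))).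
    by apply: leq_sum => x _; exact: leq_card_setU.
  rewrite big_split /= sum_card_in_nbhd addnn leq_double.
  by rewrite mulnC -sum_nat_const; apply: leq_sum.
case: (pickP [pred x in V | #|nbhd V x| <= D.*2]) => [v /andP[vV hv]|none].
  by exists v.
suff : \sum_(x in V) D.*2.+1 <= \sum_(x in V) #|nbhd V x|.
  rewrite sum_nat_const; lia.
by apply: leq_sum => x xV; have := none x; rewrite /= xV ltnNge => /negbT.
Qed.

Lemma large_independent_subset V : {in V, forall x, #|out_nbhd V x| <= D} ->
  exists F, [/\ F \subset V, independent F & #|V| <= D.*2.+1 * #|F|].
Proof.
elim: {V}_.+1 {-2}V (ltnSn #|V|) => // N IH V ltVN hout.
have [->|V0] := eqVneq V set0.
  by exists set0; rewrite sub0set cards0; split=> // x; rewrite inE.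
have [v vV hv] := low_degree_vertex V0 hout.
set V' := V :\: (v |: nbhd V v).
have sV'V : V' \subset V by apply: subsetDl.
have vV' : v \notin V' by rewrite !inE eqxx.
have ltV'N : #|V'| < N.
  suff : #|V'| < #|V| by lia.
  by apply/proper_card/properP; split=> //; exists v.
have [F' [sF'V' indF' cardF']] : exists F', [/\ F' \subset V', independent F' &
    #|V'| <= D.*2.+1 * #|F'|].
  apply: IH => // x xV'; apply: leq_trans (hout x (subsetP sV'V x xV')).
  exact/subset_leq_card/out_nbhdS.
have vF' : v \notin F' by apply: contra vV'; apply: (subsetP sF'V').
exists (v |: F'); split.
- by rewrite subUset sub1set vV (subset_trans sF'V').
- have non_adj y : y \in F' -> ~~ adj v y && ~~ adj y v.
    move=> /(subsetP sF'V'); rewrite !inE => /andP[+ yV]; rewrite yV.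
    by case: eqP => //= _; case: (adj v y); case: (adj y v).
  move=> x y; rewrite !inE => /predU1P[->|xF'] /predU1P[->|yF']; rewrite ?eqxx //.
  + by case/andP: (non_adj y yF').
  + by case/andP: (non_adj x xF').
  + exact: indF'.
- have : #|V| <= #|V'| + D.*2.+1.
    rewrite /V' cardsD -ltnS; have := subset_leq_card (subsetIr V (v |: nbhd V v)).
    rewrite cardsU1; lia.
  rewrite cardsU1 vF' mulnS; lia.
Qed.
End IndependentSet.

Section CrossingMatching.
Variable n : nat.
Implicit Types (S : {set 'I_n}) (x y : 'I_n).

Definition partner S x : 'I_n := nth x (enum (~: S)) (index x (enum S)).
Definition crossing_matching S : {set {set 'I_n}} := [set [set x; partner S x] | x in S].
Definition crossing_conflict : rel {set 'I_n} :=
  fun S S' => fully_crosses (crossing_matching S) S'.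
Definition crossers S := [set S' : {set 'I_n} | (#|S'| == #|S|) && crossing_conflict S S'].

Variable S : {set 'I_n}.
Hypothesis leS : #|S| <= #|~: S|.

Lemma partner_index_lt x : x \in S -> index x (enum S) < size (enum (~: S)).
Proof. by move=> xS; rewrite -cardE (leq_trans _ leS) // cardE index_mem mem_enum. Qed.

Lemma partner_notin x : x \in S -> partner S x \notin S.
Proof. by move=> xS; have := mem_nth x (partner_index_lt xS); rewrite mem_enum inE. Qed.

Lemma partner_neq x : x \in S -> x != partner S x.
Proof. by move=> xS; apply/eqP => exp; have := partner_notin xS; rewrite -exp xS. Qed.

Lemma partner_inj : {in S &, injective (partner S)}.
Proof.
move=> x y xS yS; rewrite /partner (set_nth_default x y (partner_index_lt yS)).
move/eqP; rewrite nth_uniq ?partner_index_lt ?enum_uniq // => /eqP.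
by apply: (index_inj x); rewrite mem_enum.
Qed.

Lemma partner_edge_inj : {in S &, injective (fun x => [set x; partner S x])}.
Proof.
move=> x y xS yS /= exy; have : x \in [set y; partner S y] by rewrite -exy set21.
rewrite !inE => /predU1P[//|/eqP xy].
by have := partner_notin yS; rewrite -xy xS.
Qed.

Lemma card_crossing_matching : #|crossing_matching S| = #|S|.
Proof. exact/card_in_imset/partner_edge_inj. Qed.

Lemma crossing_matching_is_matching : is_matching #|S| (crossing_matching S).
Proof.
apply/and3P; split; first by rewrite card_crossing_matching.
  by apply/forall_inP => _ /imsetP[x xS ->]; rewrite cards2 partner_neq.
apply/forall_inP => _ /imsetP[x xS ->]; apply/forall_inP => _ /imsetP[y yS ->].
apply/implyP => exy; have xy : x != y by apply: contraNneq exy => ->.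
have pxy : partner S x != partner S y by apply: contra xy => /eqP/partner_inj->.
have pxS := partner_notin xS; have pyS := partner_notin yS.
rewrite -setI_eq0; apply/eqP/setP => z; rewrite !inE.
apply/negP => /andP[/predU1P[->|/eqP->] /predU1P[e|/eqP e]].
- by rewrite e eqxx in xy.
- by rewrite -e xS in pyS.
- by rewrite e yS in pxS.
- by rewrite e eqxx in pxy.
Qed.

Lemma crossing_conflictE S' :
  crossing_conflict S S' = [forall x in S, (x \in S') != (partner S x \in S')].
Proof.
apply/forall_inP/forall_inP => [cross x xS | cross _ /imsetP[x xS ->]].
  rewrite -card_set2I_eq1 ?partner_neq //; apply: cross; exact: imset_f.
by rewrite card_set2I_eq1 ?partner_neq ?cross.
Qed.

Lemma crossing_matching_crosses : fully_crosses (crossing_matching S) S.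
Proof.
rewrite -/(crossing_conflict S S) crossing_conflictE.
by apply/forall_inP => x xS; rewrite xS (negbTE (partner_notin xS)).
Qed.

(* A crosser of size #|S| lies inside the vertex set of the matching, so it is
   determined by its trace on S. *)
Lemma crosser_decomposition S' : S' \in crossers S ->
  S' = (S :&: S') :|: partner S @: (S :\: S').
Proof.
rewrite inE crossing_conflictE => /andP[/eqP cardS' /forall_inP cross].
apply/esym/eqP; rewrite eqEcard; apply/andP; split.
  rewrite subUset subsetIr /=; apply/subsetP => z /imsetP[x /setDP[xS xS'] ->].
  by move: (cross x xS); rewrite (negbTE xS') => /negPn.
have disjoint_parts : S :&: S' :&: partner S @: (S :\: S') = set0.
  apply/setP => z; rewrite !inE; apply/negP => /andP[/andP[zS _]] /imsetP[x].
  by rewrite inE => /andP[_ xS] zx; have := partner_notin xS; rewrite -zx zS.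
rewrite cardsU disjoint_parts cards0 subn0 cardS' card_in_imset ?cardsID //.
by move=> x y /setDP[xS _] /setDP[yS _]; apply: partner_inj.
Qed.

Lemma card_crossers : #|crossers S| <= 2 ^ #|S|.
Proof.
rewrite -card_powerset -(@card_in_imset _ _ (setI S)); last first.
  move=> S1 S2 S1c S2c /= eqI.
  have eqD : S :\: S1 = S :\: S2.
    by rewrite -[LHS]set0U -[RHS]set0U -(setDv S) -!setDIr eqI.
  by rewrite (crosser_decomposition S1c) (crosser_decomposition S2c) eqI eqD.
by apply/subset_leq_card/subsetP => _ /imsetP[S' _ ->]; rewrite powersetE subsetIl.
Qed.
End CrossingMatching.
Arguments crossing_matching {n}.
Arguments crossing_conflict {n}.

Lemma independent_crossing_conflictE n (F : {set {set 'I_n}}) :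
  {in F, forall S : {set 'I_n}, #|S| <= #|~: S|} -> independent crossing_conflict F ->
  {in F &, forall S S', crossing_conflict S S' = (S == S')}.
Proof.
move=> leF indF S S' SF S'F; have [<-|SS'] := eqVneq S S'.
  exact: crossing_matching_crosses (leF S SF).
exact/negbTE/indF.
Qed.

Local Open Scope ring_scope.

Lemma prod_set2_lt (R : comPzSemiRingType) m (f : 'I_m -> 'I_m -> R) (a b : 'I_m) :
  (a < b)%N -> \prod_(i in [set a; b]) \prod_(j in [set a; b] | (i < j)%N) f i j = f a b.
Proof.
move=> ab; have nab : a \notin [set b] by rewrite inE neq_ltn ab.
rewrite big_setU1 // big_set1 !big_mkcondr !big_setU1 // !big_set1 /=.
by rewrite ltnn ab ltnNge ltnW //= ltnn !mul1r mulr1.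
Qed.

Section Evaluation.
Variables (R : idomainType) (n : nat).
Implicit Types (S e : {set 'I_n}) (M : {set {set 'I_n}}).

Lemma meval_indic_subX S (i j : 'I_n) :
  (('X_i - 'X_j : {mpoly R[n]}).@[indic R S] != 0) = ((i \in S) != (j \in S)).
Proof.
rewrite mevalB !mevalXU /indic.
by case: (i \in S); case: (j \in S); rewrite ?subrr ?subr0 ?sub0r ?oppr_eq0 ?oner_eq0 ?eqxx.
Qed.

Lemma meval_edge_neq0 S e : #|e| = 2%N ->
  ((\prod_(i in e) \prod_(j in e | (i < j)%N) ('X_i - 'X_j) : {mpoly R[n]}).@[indic R S]
    != 0) = (#|e :&: S| == 1%N).
Proof.
move=> /eqP/cards2P[a [b [ab ->]]].
wlog lt_ab : a b ab / (a < b)%N.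
  move=> lt_case; have [|lt_ba|eq_ab] := ltngtP a b; first exact: lt_case.
    by rewrite setUC lt_case // eq_sym.
  by rewrite (val_inj eq_ab) eqxx in ab.
by rewrite prod_set2_lt // meval_indic_subX card_set2I_eq1.
Qed.

Lemma meval_qM_neq0 S M : {in M, forall e, #|e| = 2%N} ->
  ((qM R M).@[indic R S] != 0) = fully_crosses M S.
Proof.
move=> edges2; rewrite /qM rmorph_prod /=.
apply/prodf_neq0/forall_inP => [neq0 e eM | cross e eM].
  by rewrite -meval_edge_neq0 ?neq0 ?edges2.
by rewrite meval_edge_neq0 ?cross ?edges2.
Qed.

Lemma separated_mpoly_free (I : finType) (A : {set I}) (p : I -> {mpoly R[n]})
    (c : I -> R) :
  {in A, forall i, exists x,
    (p i).@[x] != 0 /\ {in A, forall j, j != i -> (p j).@[x] = 0}} ->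
  \sum_(i in A) c i *: p i = 0 -> {in A, forall i, c i = 0}.
Proof.
move=> separated sum0 i iA; have [x [pix_neq0 pjx0]] := separated i iA.
move/(congr1 (meval x)): sum0; rewrite raddf_sum (bigD1 i) //= big1 ?addr0.
  by rewrite mevalZ raddf0 => /eqP; rewrite mulf_eq0 (negbTE pix_neq0) orbF => /eqP.
by move=> j /andP[jA ji]; rewrite mevalZ pjx0 ?mulr0.
Qed.
End Evaluation.

Lemma unique_in_imset (T U : finType) (f : T -> U) (F : {set T}) (P : pred U) x :
  x \in F -> {in F, forall y, P (f y) = (y == x)} -> exists! u, u \in f @: F /\ P u.
Proof.
move=> xF Pf; exists (f x); split; first by rewrite imset_f // Pf.
by move=> _ [/imsetP[y yF ->]]; rewrite Pf // => /eqP->.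
Qed.

Theorem lemma2 (R : realFieldType) (n d : nat) (hd : (1 <= d)%N) (hn : (2 * d <= n)%N) :
  exists (Md : {set {set {set 'I_n}}}) (Sd : {set {set 'I_n}}),
    (forall M, M \in Md -> is_matching d M) /\
    (forall S, S \in Sd -> #|S| = d) /\
    ('C(n, d) <= 4 * 2 ^ d * #|Md|)%N /\
    (forall S, S \in Sd -> exists! M, M \in Md /\ fully_crosses M S) /\
    (forall M, M \in Md -> exists S, S \in Sd /\ fully_crosses M S) /\
    (forall S, S \in Sd ->
       exists! M, M \in Md /\ (qM R M).@[indic R S] != 0) /\
    (forall c : {set {set 'I_n}} -> R,
       \sum_(M in Md) c M *: qM R M = 0 -> forall M, M \in Md -> c M = 0).
Proof.
pose V := [set S : {set 'I_n} | #|S| == d].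
have le_compl (S : {set 'I_n}) : #|S| = d -> (#|S| <= #|~: S|)%N.
  by move=> cardS; have := cardsC S; rewrite card_ord cardS; lia.
have [F [sFV indF cardV]] : exists F : {set {set 'I_n}},
    [/\ F \subset V, independent crossing_conflict F & (#|V| <= (2 ^ d).*2.+1 * #|F|)%N].
  apply: large_independent_subset => S; rewrite inE => /eqP cardS.
  rewrite -cardS; apply: leq_trans (card_crossers (le_compl S cardS)).
  by apply/subset_leq_card/subsetP => S'; rewrite !inE cardS; case/and3P=> -> _ ->.
have cardF : {in F, forall S : {set 'I_n}, #|S| = d}.
  by move=> S /(subsetP sFV); rewrite inE => /eqP.
have crossesF S : S \in F -> fully_crosses (crossing_matching S) S.
  by move=> SF; apply/crossing_matching_crosses/le_compl/cardF.
have conflictF := independent_crossing_conflictE (fun S SF => le_compl S (cardF S SF)) indF.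
have matchingF : {in F, forall S : {set 'I_n}, is_matching d (crossing_matching S)}.
  by move=> S SF; rewrite -{1}(cardF S SF) crossing_matching_is_matching ?le_compl ?cardF.
have qM_neq0F S S' : S \in F -> S' \in F ->
    ((qM R (crossing_matching S')).@[indic R S] != 0) = (S' == S).
  move=> SF S'F; rewrite meval_qM_neq0; first exact: conflictF.
  by move=> e; case/and3P: (matchingF S' S'F) => _ /forall_inP edges _ /edges/eqP.
exists (crossing_matching @: F), F; split; [|split; [exact: cardF|split]].
- by move=> _ /imsetP[S SF ->]; exact: matchingF.
- have injF : {in F &, injective crossing_matching}.
    move=> S S' SF S'F eqM; apply/eqP; rewrite -conflictF //.
    by rewrite /crossing_conflict eqM crossesF.
  have <- : #|V| = 'C(n, d) by rewrite card_draws card_ord.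
  rewrite card_in_imset //; apply: leq_trans cardV (leq_mul _ (leqnn _)).
  by have := expn_gt0 2 d; lia.
split; first by move=> S SF; apply: (unique_in_imset SF) => S' S'F; exact: conflictF.
split; first by move=> _ /imsetP[S SF ->]; exists S; rewrite crossesF.
split; first by move=> S SF; apply: (unique_in_imset SF) => S' S'F; exact: qM_neq0F.
move=> c; apply: separated_mpoly_free => _ /imsetP[S SF ->].
exists (indic R S); split; first by rewrite qM_neq0F.
move=> _ /imsetP[S' S'F ->] neqM; apply/eqP; rewrite -[_ == 0]negbK qM_neq0F //.
by apply: contra neqM => /eqP->.
Qed.
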